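(* Let $(P_n)$ be a sequence of finite posets. Then the following are equivalent: (i) $t(Q,P_n)$ converges for every poset $Q\in\mathcal P$, and $|P_n|$ converges to some limit in $\mathbb N\cup\{\infty\}$; (ii) $t_{\mathrm{inj}}(Q,P_n)$ converges for every $Q\in\mathcal P$; (iii) $t_{\mathrm{ind}}(Q,P_n)$ converges for every $Q\in\mathcal P$; (iv) $t(F,P_n)$ converges for every digraph $F\in\mathcal D$, and $|P_n|$ converges to some limit in $\mathbb N\cup\{\infty\}$; (v) $t_{\mathrm{inj}}(F,P_n)$ converges for every $F\in\mathcal D$; (vi) $t_{\mathrm{ind}}(F,P_n)$ converges for every $F\in\mathcal D$.
   Context: A digraph has a vertex set $V$ and edge set $E\subseteq V\times V$ (loops allowed); $\mathcal D$ is the set of isomorphism classes of finite nonempty digraphs. A poset (nonempty set with strict partial order $<$) is regarded as the digraph with an edge $i\to j$ iff $i<j$; $\mathcal P\subset\mathcal D$ is the set of isomorphism classes of finite nonempty posets. For finite digraphs $F,G$: $t(F,G)$ is the proportion of all maps $\varphi:V(F)\to V(G)$ that are homomorphisms ($i\to j$ in $F$ implies $\varphi(i)\to\varphi(j)$ in $G$); $t_{\mathrm{inj}}(F,G)$ is the proportion of injective maps that are homomorphisms; $t_{\mathrm{ind}}(F,G)$ is the proportion of injective maps $\varphi$ with ($i\to j$ in $F$ iff $\varphi(i)\to\varphi(j)$ in $G$) for all $i,j$; if $|F|>|G|$, $t_{\mathrm{inj}}(F,G)=t_{\mathrm{ind}}(F,G)=0$. For posets these coincide with the poset versions. *)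

From Stdlib Require Import Reals.
From mathcomp Require Import all_boot.
Set Implicit Arguments. Unset Strict Implicit. Unset Printing Implicit Defensive.

Record digraph := Digraph { dv : nat; de : rel 'I_dv }.

Definition nonempty (G : digraph) : Prop := (0 < dv G)%N.

(* A poset (strict partial order) viewed as digraph: i -> j iff i < j. *)
Definition is_poset (G : digraph) : Prop :=
  (forall i, ~~ @de G i i) /\ (forall i j k, @de G i j -> @de G j k -> @de G i k).

Definition is_hom (F G : digraph) (f : {ffun 'I_(dv F) -> 'I_(dv G)}) : bool :=
  [forall i, forall j, @de F i j ==> @de G (f i) (f j)].

Definition is_ind (F G : digraph) (f : {ffun 'I_(dv F) -> 'I_(dv G)}) : bool :=
  injectiveb f && [forall i, forall j, @de F i j == @de G (f i) (f j)].

Open Scope R_scope.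

Definition t (F G : digraph) : R :=
  INR #|[set f : {ffun 'I_(dv F) -> 'I_(dv G)} | is_hom f]| / INR (dv G ^ dv F)%N.

Definition t_inj (F G : digraph) : R :=
  if (dv G < dv F)%N then 0
  else INR #|[set f : {ffun 'I_(dv F) -> 'I_(dv G)} | injectiveb f && is_hom f]|
       / INR #|[set f : {ffun 'I_(dv F) -> 'I_(dv G)} | injectiveb f]|.

Definition t_ind (F G : digraph) : R :=
  if (dv G < dv F)%N then 0
  else INR #|[set f : {ffun 'I_(dv F) -> 'I_(dv G)} | is_ind f]|
       / INR #|[set f : {ffun 'I_(dv F) -> 'I_(dv G)} | injectiveb f]|.

Definition converges (u : nat -> R) : Prop := exists l, Un_cv u l.

Definition nat_converges_ext (a : nat -> nat) : Prop :=
  (exists m n0, forall n, (n0 <= n)%N -> a n = m) \/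
  (forall M, exists n0, forall n, (n0 <= n)%N -> (M <= a n)%N).

From Stdlib Require Import Reals Lra Psatz ZArith Classical.
From mathcomp Require Import all_boot zify.

(** A homomorphism f : F -> G is an injective homomorphism from the quotient of F by the kernel
    partition of f, so hom(F, G) is the sum of inj(F/r, G) over all partitions r of V(F), the
    trivial partition contributing inj(F, G) itself.  If |P_n| is eventually a constant M, every
    density is an integer count divided by a fixed positive number, so convergence means eventual
    constancy of the count, and this passes through the triangular system above in both
    directions.  If |P_n| -> oo, all but a fraction |F|^2/|P_n| of the maps V(F) -> V(P_n) are
    injective, so t and t_inj have the same limits.  Induced densities are recovered from
    injective ones, and conversely, by inclusion-exclusion over the non-edges of F.  The
    injective density of the k-antichain in P_n is 1 or 0 according as |P_n| >= k, which forces
    |P_n| to converge in N U {oo}.  Finally, posets suffice as test digraphs: homomorphisms into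
    a poset are the homomorphisms from the transitive closure of F (there are none if that has a
    loop), and induced embeddings into a poset exist only if F is itself a poset. *)

Set Implicit Arguments. Unset Strict Implicit. Unset Printing Implicit Defensive.
Local Open Scope nat_scope.

Section KernelRepresentative.
Variable I : finType.

(* [kerrep f] sends i to a chosen point of its fibre under f, so it encodes the kernel partition
   of f; the functions r with [is_kerrep r] are exactly these encodings. *)
Definition kerrep (T : eqType) (f : {ffun I -> T}) : {ffun I -> I} :=
  [ffun i => odflt i [pick j | f j == f i]].

Definition is_kerrep (r : {ffun I -> I}) : bool := kerrep r == r.

Definition reps (r : {ffun I -> I}) : {set I} := [set i | r i == i].

Implicit Types (r : {ffun I -> I}).

Lemma f_kerrep (T : eqType) (f : {ffun I -> T}) i : f (kerrep f i) = f i.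
Proof. by rewrite ffunE; case: pickP => [j /eqP|]. Qed.

Lemma eq_kerrep (T : eqType) (f : {ffun I -> T}) i j : (kerrep f i == kerrep f j) = (f i == f j).
Proof.
apply/eqP/eqP => [e|e]; first by rewrite -f_kerrep e f_kerrep.
rewrite !ffunE (@eq_pick _ (fun x => f x == f i) (fun x => f x == f j)) => [|x]; last by rewrite e.
by case: pickP => [//|/(_ j)]; rewrite eqxx.
Qed.

Lemma kerrep_ext (T1 T2 : eqType) (f : {ffun I -> T1}) (g : {ffun I -> T2}) :
  (forall i j, (f i == f j) = (g i == g j)) -> kerrep f = kerrep g.
Proof. by move=> fg; apply/ffunP => i; rewrite !ffunE (@eq_pick _ _ (fun x => g x == g i)). Qed.

Lemma is_kerrep_kerrep (T : eqType) (f : {ffun I -> T}) : is_kerrep (kerrep f).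
Proof. by apply/eqP; apply: kerrep_ext => i j; rewrite eq_kerrep. Qed.

Lemma kerrep_unique (T : eqType) (f : {ffun I -> T}) r : is_kerrep r ->
  (forall i j, (f i == f j) = (r i == r j)) -> kerrep f = r.
Proof. by move=> /eqP kr fr; rewrite -kr; apply: kerrep_ext. Qed.

Lemma kerrep_idem r i : is_kerrep r -> r (r i) = r i.
Proof. by move=> /eqP kr; have := f_kerrep r i; rewrite kr. Qed.

Lemma kerrep_id_injective (T : eqType) (f : {ffun I -> T}) :
  (kerrep f == [ffun i => i]) = injectiveb f.
Proof.
apply/eqP/injectiveP => [kf i j fij|f_inj].
  by apply/eqP; have := eq_kerrep f i j; rewrite kf !ffunE fij eqxx.
apply/ffunP => i; rewrite !ffunE.
by case: pickP => [j /eqP/f_inj //|/(_ i)]; rewrite eqxx.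
Qed.

Lemma is_kerrep_id : is_kerrep [ffun i : I => i].
Proof. by rewrite /is_kerrep kerrep_id_injective; apply/injectiveP => i j; rewrite !ffunE. Qed.

Lemma mem_reps r i : is_kerrep r -> r i \in reps r.
Proof. by move=> kr; rewrite inE kerrep_idem. Qed.

Lemma card_reps_lt r : r != [ffun i => i] -> #|reps r| < #|I|.
Proof.
move=> r_nid; rewrite -cardsT; apply: proper_card; rewrite properT.
apply: contra r_nid => /eqP reps_all; apply/eqP/ffunP => i; rewrite ffunE.
by apply/eqP; move: (in_setT i); rewrite -reps_all inE.
Qed.

End KernelRepresentative.

Definition hom_count (F G : digraph) : nat :=
  #|[set f : {ffun 'I_(dv F) -> 'I_(dv G)} | is_hom f]|.

Definition inj_hom_count (F G : digraph) : nat :=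
  #|[set f : {ffun 'I_(dv F) -> 'I_(dv G)} | injectiveb f && is_hom f]|.

(* The quotient of F by the partition r: its vertices are the representatives [reps r],
   numbered by [enum_val]. *)
Definition contract (F : digraph) (r : {ffun 'I_(dv F) -> 'I_(dv F)}) : digraph :=
  @Digraph #|reps r| (fun a b => [exists i, exists j,
    [&& r i == enum_val a, r j == enum_val b & @de F i j]]).

Arguments contract : clear implicits.

Lemma contract_nonempty F r : is_kerrep r -> nonempty F -> nonempty (contract F r).
Proof. by move=> kr F_ne; apply/card_gt0P; exists (r (Ordinal F_ne)); apply: mem_reps. Qed.

Section ContractFiber.
Variables (F G : digraph) (r : {ffun 'I_(dv F) -> 'I_(dv F)}).
Hypothesis r_ker : is_kerrep r.

Let fiber := [set f : {ffun 'I_(dv F) -> 'I_(dv G)} | is_hom f && (kerrep f == r)].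
Let rep_index (i : 'I_(dv F)) : 'I_(dv (contract F r)) := enum_rank_in (mem_reps i r_ker) (r i).
Let restrict (f : {ffun 'I_(dv F) -> 'I_(dv G)}) : {ffun 'I_(dv (contract F r)) -> 'I_(dv G)} :=
  [ffun a => f (enum_val a)].
Let lift (g : {ffun 'I_(dv (contract F r)) -> 'I_(dv G)}) : {ffun 'I_(dv F) -> 'I_(dv G)} :=
  [ffun i => g (rep_index i)].

Lemma enum_val_rep_index i : enum_val (rep_index i) = r i.
Proof. exact/enum_rankK_in/mem_reps. Qed.

Lemma eq_rep_index i j : (rep_index i == rep_index j) = (r i == r j).
Proof. by rewrite -!enum_val_rep_index (inj_eq enum_val_inj). Qed.

Lemma r_enum_val (a : 'I_#|reps r|) : r (enum_val a) = enum_val a.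
Proof. by have := enum_valP a; rewrite inE => /eqP. Qed.

Lemma rep_index_enum_val (a : 'I_#|reps r|) : rep_index (enum_val a) = a.
Proof. by apply: enum_val_inj; rewrite enum_val_rep_index r_enum_val. Qed.

Lemma fiber_kerrep f : f \in fiber -> forall i, f (r i) = f i.
Proof. by rewrite inE => /andP [_ /eqP <-] i; rewrite f_kerrep. Qed.

Lemma restrictK f : f \in fiber -> lift (restrict f) = f.
Proof. by move=> f_fib; apply/ffunP => i; rewrite !ffunE enum_val_rep_index fiber_kerrep. Qed.

Lemma liftK (g : {ffun 'I_(dv (contract F r)) -> 'I_(dv G)}) : restrict (lift g) = g.
Proof. by apply/ffunP => a; rewrite !ffunE rep_index_enum_val. Qed.

Lemma restrict_fiber f : f \in fiber -> injectiveb (restrict f) && is_hom (restrict f).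
Proof.
move=> f_fib; have := f_fib; rewrite inE => /andP [/forallP f_hom /eqP kf].
apply/andP; split.
  apply/injectiveP => a b; rewrite !ffunE => fab; apply: enum_val_inj.
  by apply/eqP; have := eq_kerrep f (enum_val a) (enum_val b); rewrite kf fab eqxx !r_enum_val.
apply/forallP => a; apply/forallP => b; apply/implyP => /existsP [i /existsP [j]].
case/and3P => /eqP ri /eqP rj fij; rewrite !ffunE -ri -rj !fiber_kerrep //.
by move: (f_hom i) => /forallP /(_ j) /implyP; apply.
Qed.

Lemma lift_fiber (g : {ffun 'I_(dv (contract F r)) -> 'I_(dv G)}) :
  injectiveb g && is_hom g -> lift g \in fiber.
Proof.
case/andP => /injectiveP g_inj /forallP g_hom; rewrite inE; apply/andP; split.
  apply/forallP => i; apply/forallP => j; apply/implyP => fij; rewrite !ffunE.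
  move: (g_hom (rep_index i)) => /forallP /(_ (rep_index j)) /implyP; apply.
  by apply/existsP; exists i; apply/existsP; exists j; rewrite !enum_val_rep_index !eqxx.
apply/eqP/kerrep_unique => // i j.
by rewrite !ffunE (inj_eq g_inj) eq_rep_index.
Qed.

Lemma card_hom_kerrep :
  #|[set f : {ffun 'I_(dv F) -> 'I_(dv G)} | is_hom f && (kerrep f == r)]| =
  inj_hom_count (contract F r) G.
Proof.
rewrite -(card_in_imset (f := restrict)) => [|f1 f2 f1_fib f2_fib e]; last first.
  by rewrite -(restrictK f1_fib) -(restrictK f2_fib) e.
apply: eq_card => g; apply/imsetP/idP => [[f f_fib ->]|g_inj]; rewrite ?inE.
  exact: restrict_fiber.
by exists (lift g); [apply: lift_fiber; rewrite inE in g_inj | rewrite liftK].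
Qed.

End ContractFiber.

Lemma hom_count_kerrep F G :
  hom_count F G = \sum_(r | is_kerrep r) inj_hom_count (contract F r) G.
Proof.
rewrite /hom_count -sum1_card (partition_big (@kerrep _ _) (@is_kerrep _)) => [|f _]; last first.
  exact: is_kerrep_kerrep.
apply: eq_bigr => r r_ker; rewrite -card_hom_kerrep // -sum1_card.
by apply: eq_bigl => f; rewrite !inE.
Qed.

Lemma hom_count_inj_contract F G :
  hom_count F G = inj_hom_count F G +
    \sum_(r | is_kerrep r && (r != [ffun i => i])) inj_hom_count (contract F r) G.
Proof.
rewrite hom_count_kerrep (bigD1 [ffun i => i]) ?is_kerrep_id //=; congr (_ + _).
rewrite -card_hom_kerrep ?is_kerrep_id //; apply: eq_card => f.
by rewrite !inE kerrep_id_injective andbC.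
Qed.

Lemma inj_hom_count_le_hom F G : inj_hom_count F G <= hom_count F G.
Proof. by apply: subset_leq_card; apply/subsetP => f; rewrite !inE => /andP []. Qed.

Lemma hom_count_loop F G i : (forall x, ~~ @de G x x) -> @de F i i -> hom_count F G = 0.
Proof.
move=> G_irr Fii; apply/eqP; rewrite cards_eq0; apply/eqP/setP => f; rewrite !inE.
by apply/negP => /forallP /(_ i) /forallP /(_ i); rewrite Fii (negbTE (G_irr _)).
Qed.

Definition tclosure (F : digraph) : digraph :=
  @Digraph (dv F) (fun i j => [exists l, @de F i l && connect (@de F) l j]).

Lemma tclosure_poset F : (forall i, ~~ @de (tclosure F) i i) -> is_poset (tclosure F).
Proof.
move=> irr; split => // i j k /existsP [l /andP [Fil lj]] /existsP [l' /andP [Fjl' l'k]].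
apply/existsP; exists l; rewrite Fil /=.
by apply: connect_trans lj _; apply: connect_trans l'k; apply: connect1.
Qed.

Section PosetTarget.
Variables (F G : digraph).
Hypothesis G_poset : is_poset G.

Lemma hom_connect (f : {ffun 'I_(dv F) -> 'I_(dv G)}) l j : is_hom f ->
  connect (@de F) l j -> l = j \/ @de G (f l) (f j).
Proof.
move=> /forallP f_hom /connectP [p]; elim: p l => [|x p IH] l /=; first by move=> _ ->; left.
move=> /andP [Flx px] ej; have Gflx : @de G (f l) (f x).
  by move: (f_hom l) => /forallP /(_ x) /implyP; apply.
by case: (IH x px ej) => [<-|Gfxj]; right => //; apply: (proj2 G_poset) Gfxj.
Qed.

Lemma is_hom_tclosure (f : {ffun 'I_(dv F) -> 'I_(dv G)}) :
  @is_hom (tclosure F) G f = is_hom f.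
Proof.
apply/idP/idP => f_hom; apply/forallP => i; apply/forallP => j; apply/implyP.
  move=> Fij; move: f_hom => /forallP /(_ i) /forallP /(_ j) /implyP; apply.
  by apply/existsP; exists j; rewrite Fij connect0.
case/existsP => l /andP [Fil lj].
have Gfil : @de G (f i) (f l) by move: f_hom => /forallP /(_ i) /forallP /(_ l) /implyP; apply.
by case: (hom_connect f_hom lj) => [<- //|]; apply: (proj2 G_poset) Gfil.
Qed.

Lemma hom_count_tclosure : hom_count (tclosure F) G = hom_count F G.
Proof. by apply: eq_card => f; rewrite !inE is_hom_tclosure. Qed.

Lemma inj_hom_count_tclosure : inj_hom_count (tclosure F) G = inj_hom_count F G.
Proof. by apply: eq_card => f; rewrite !inE is_hom_tclosure. Qed.

Lemma ind_poset (f : {ffun 'I_(dv F) -> 'I_(dv G)}) : is_ind f -> is_poset F.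
Proof.
case/andP => _ /forallP f_ind; have E i j : @de F i j = @de G (f i) (f j).
  by apply/eqP; move: (f_ind i) => /forallP.
by split => [i|i j k]; rewrite !E; [apply: (proj1 G_poset) | apply: (proj2 G_poset)].
Qed.

End PosetTarget.

Definition avoid_count (F G : digraph) (S : {set 'I_(dv F) * 'I_(dv F)}) : nat :=
  #|[set f : {ffun 'I_(dv F) -> 'I_(dv G)} |
     [&& injectiveb f, is_hom f & [forall p in S, ~~ @de G (f p.1) (f p.2)]]]|.

Arguments avoid_count : clear implicits.

Definition add_edge (F : digraph) (e : 'I_(dv F) * 'I_(dv F)) : digraph :=
  @Digraph (dv F) (fun i j => @de F i j || ((i, j) == e)).

Arguments add_edge : clear implicits.

Definition non_edges (F : digraph) : {set 'I_(dv F) * 'I_(dv F)} := [set p | ~~ @de F p.1 p.2].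

Lemma non_edges_add_edge F e : non_edges (add_edge F e) = non_edges F :\ e.
Proof.
by apply/setP => p; rewrite !inE /= negb_or andbC -surjective_pairing.
Qed.

Lemma is_hom_add_edge F G e (f : {ffun 'I_(dv F) -> 'I_(dv G)}) :
  @is_hom (add_edge F e) G f = is_hom f && @de G (f e.1) (f e.2).
Proof.
apply/idP/andP => [/forallP f_hom|[/forallP f_hom Ge]].
  split; last by move: (f_hom e.1) => /forallP /(_ e.2); rewrite /= -surjective_pairing eqxx orbT.
  apply/forallP => i; apply/forallP => j; apply/implyP => Fij.
  by move: (f_hom i) => /forallP /(_ j); rewrite /= Fij.
apply/forallP => i; apply/forallP => j; apply/implyP => /orP [Fij|/eqP ije].
  by move: (f_hom i) => /forallP /(_ j) /implyP; apply.
by rewrite -ije in Ge.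
Qed.

Lemma avoid_count0 F G : avoid_count F G set0 = inj_hom_count F G.
Proof.
apply: eq_card => f; rewrite !inE; congr (_ && _); case: (is_hom f); rewrite ?andbF ?andbT //.
by apply/forallP => p; rewrite inE.
Qed.

Lemma avoid_count_non_edges F G :
  avoid_count F G (non_edges F) = #|[set f : {ffun 'I_(dv F) -> 'I_(dv G)} | is_ind f]|.
Proof.
apply: eq_card => f; rewrite !inE /is_ind; case: (injectiveb f) => //=.
apply/andP/forallP => [[/forallP f_hom /forallP f_avoid] i|f_ind].
  apply/forallP => j; case Fij: (@de F i j).
    by move: (f_hom i) => /forallP /(_ j); rewrite Fij /= => ->.
  by move: (f_avoid (i, j)); rewrite inE Fij => /negbTE ->.
split; apply/forallP.
  by move=> i; apply/forallP => j; apply/implyP => Fij; move: (f_ind i) => /forallP /(_ j) /eqP <-.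
move=> p; apply/implyP; rewrite inE => /negbTE Fp.
by move: (f_ind p.1) => /forallP /(_ p.2) /eqP <-; rewrite Fp.
Qed.

(* An injective hom avoiding S either avoids e too or maps e onto an edge. *)
Lemma avoid_count_setU1 F G (S : {set 'I_(dv F) * 'I_(dv F)}) e : e \notin S ->
  avoid_count F G (e |: S) + avoid_count (add_edge F e) G S = avoid_count F G S.
Proof.
move=> eS; rewrite /avoid_count addnC.
rewrite -[RHS](cardsID [set f : {ffun 'I_(dv F) -> 'I_(dv G)} | @de G (f e.1) (f e.2)]).
have forall_setU1 (f : {ffun 'I_(dv F) -> 'I_(dv G)}) :
    [forall p in e |: S, ~~ @de G (f p.1) (f p.2)] =
    ~~ @de G (f e.1) (f e.2) && [forall p in S, ~~ @de G (f p.1) (f p.2)].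
  apply/forallP/andP => [avoid|[Ge /forallP avoid] p].
    split; first by move: (avoid e); rewrite !inE eqxx.
    by apply/forallP => p; apply/implyP => pS; move: (avoid p); rewrite !inE pS orbT.
  by rewrite !inE; apply/implyP => /orP [/eqP -> //|pS]; move: (avoid p) => /implyP; apply.
congr (_ + _); apply: eq_card => f; rewrite !inE ?is_hom_add_edge ?forall_setU1;
  by case: (injectiveb f) (@de G (f e.1) (f e.2)) => [] [] /=; rewrite ?andbT ?andbF.
Qed.

Lemma card_injective_ffun k m : #|[set f : {ffun 'I_k -> 'I_m} | injectiveb f]| = m ^_ k.
Proof. by rewrite card_inj_ffuns !card_ord. Qed.

Lemma inj_hom_count_le F G : inj_hom_count F G <= dv G ^_ dv F.
Proof.
rewrite -card_injective_ffun; apply: subset_leq_card.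
by apply/subsetP => f; rewrite !inE => /andP [].
Qed.

Lemma hom_count_le_inj F G : hom_count F G <= inj_hom_count F G + (dv G ^ dv F - dv G ^_ dv F).
Proof.
rewrite /hom_count /inj_hom_count -card_injective_ffun.
set Inj := [set f : {ffun 'I_(dv F) -> 'I_(dv G)} | injectiveb f].
set H := [set f : {ffun 'I_(dv F) -> 'I_(dv G)} | is_hom f].
have -> : dv G ^ dv F = #|Inj| + #|~: Inj| by rewrite cardsC card_ffun !card_ord.
rewrite addKn -(cardsID Inj H); apply: leq_add; apply: subset_leq_card; apply/subsetP => f.
  by rewrite !inE andbC.
by rewrite !inE => /andP [].
Qed.

Lemma sum_ltn_nat x B : x <= B -> \sum_(0 <= j < B) (j < x) = x.
Proof.
move=> xB; rewrite (big_cat_nat (leq0n x) xB) /= big_nat_cond.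
rewrite (eq_bigr (fun _ => 1)) => [|j /andP [/andP [_ jx] _]]; last by rewrite jx.
rewrite -big_nat_cond sum_nat_const_nat muln1 subn0 big_nat_cond big1 ?addn0 //.
by move=> j /andP [/andP [xj _] _]; rewrite ltnNge xj.
Qed.

Lemma exp_sub_ffact_le m k : k <= m -> m ^_ k <= m ^ k /\ m * (m ^ k - m ^_ k) <= k * k * m ^ k.
Proof.
elim: k => [|k IH] km; first by rewrite ffactn0 expn0 subnn muln0.
have [ffact_le exp_sub_le] := IH (ltnW km).
rewrite ffactnSr expnS; move: ffact_le exp_sub_le; set x := m ^_ k; set y := m ^ k => xy sub_le.
have step : x * (m - k) <= m * y by rewrite mulnC; apply: leq_mul (leq_subr _ _) xy.
split=> //; have e : m - k + k = m by rewrite subnK // ltnW.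
by move: (m - k) e step => d e step; subst m; nia.
Qed.

Definition eventually_const (a : nat -> nat) : Prop :=
  exists N c, forall n, N <= n -> a n = c.

Lemma eventually_const_ext (a b : nat -> nat) N :
  (forall n, N <= n -> a n = b n) -> eventually_const b -> eventually_const a.
Proof.
move=> ab [N' [c bc]]; exists (maxn N' N), c => n; rewrite geq_max => /andP [hN' hN].
by rewrite ab // bc.
Qed.

Lemma eventually_const_sub (a b : nat -> nat) :
  eventually_const a -> eventually_const b -> eventually_const (fun n => a n - b n).
Proof.
move=> [Na [ca ac]] [Nb [cb bc]]; exists (maxn Na Nb), (ca - cb) => n.
by rewrite geq_max => /andP [hNa hNb]; rewrite ac // bc.
Qed.

Lemma eventually_const_sum (I : Type) (s : seq I) (P : pred I) (a : I -> nat -> nat) :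
  (forall i, P i -> eventually_const (a i)) ->
  eventually_const (fun n => \sum_(i <- s | P i) a i n).
Proof.
move=> a_ev; elim: s => [|i s [N [c sc]]]; first by exists 0, 0 => n _; rewrite big_nil.
case Pi: (P i); last by exists N, c => n hN; rewrite big_cons Pi sc.
have [N' [c' ic]] := a_ev i Pi; exists (maxn N N'), (c' + c) => n.
by rewrite geq_max => /andP [hN hN']; rewrite big_cons Pi sc // ic.
Qed.

Lemma nat_converges_ext_thresholds (m : nat -> nat) :
  (forall j, eventually_const (fun n => j <= m n)) -> nat_converges_ext m.
Proof.
move=> thr; have [m_inf|] := classic (forall B, exists N, forall n, N <= n -> B <= m n).
  by right.
case/not_all_ex_not => B not_inf; left.
have [N [c Bc]] := thr B.
have m_small n : N <= n -> m n < B.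
  move=> hN; rewrite ltnNge; apply/negP => Bmn; apply: not_inf; exists N => n' hN'.
  by have := Bc n' hN'; rewrite -(Bc n hN) Bmn; case: (B <= m n').
suff [N' [c' mc]] : eventually_const m by exists c', N'.
apply: (@eventually_const_ext _ (fun n => \sum_(0 <= j < B) (j < m n)) N) => [n hN|].
  by rewrite sum_ltn_nat // ltnW // m_small.
by apply: eventually_const_sum => j _; apply: thr.
Qed.

Local Open Scope R_scope.

Lemma INR_eq_of_close a b : Rabs (INR a - INR b) < 1 -> a = b.
Proof.
move=> close; case: (Nat.lt_total a b) => [ab|[//|ba]].
  have := le_INR _ _ ab; rewrite S_INR => h; rewrite Rabs_left in close; lra.
have := le_INR _ _ ba; rewrite S_INR => h; rewrite Rabs_right in close; lra.
Qed.

Lemma eventually_const_of_converges (u : nat -> R) (a : nat -> nat) (c : R) N : 0 < c ->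
  (forall n, (N <= n)%N -> u n = INR (a n) / c) -> converges u -> eventually_const a.
Proof.
move=> c_pos ua [l ul]; have [N' HN'] := ul (/ (2 * c)) ltac:(apply/Rinv_0_lt_compat; lra).
pose N0 := maxn N' N; exists N0, (a N0) => n hn; apply: INR_eq_of_close.
have [hN' hN] : (N' <= n)%N /\ (N <= n)%N by move: hn; rewrite geq_max => /andP.
have /HN' close_n : (n >= N')%coq_nat by apply/leP.
have /HN' close_N0 : (N0 >= N')%coq_nat by apply/leP; apply: leq_maxl.
rewrite /R_dist ua // in close_n; rewrite /R_dist ua ?leq_maxr // in close_N0.
have -> : INR (a n) - INR (a N0) = c * ((INR (a n) / c - l) - (INR (a N0) / c - l)).
  by field; lra.
rewrite Rabs_mult Rabs_right; last lra.
have : Rabs ((INR (a n) / c - l) - (INR (a N0) / c - l)) < / c.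
  apply: Rle_lt_trans (Rabs_triang _ _) _; rewrite Rabs_Ropp.
  have -> : / c = / (2 * c) + / (2 * c) by field; lra.
  lra.
by move=> h; apply: Rlt_le_trans (Rmult_lt_compat_l _ _ _ c_pos h) _; rewrite Rinv_r; lra.
Qed.

Lemma converges_of_eventually_const (u : nat -> R) (a : nat -> nat) (f : nat -> R) N :
  (forall n, (N <= n)%N -> u n = f (a n)) -> eventually_const a -> converges u.
Proof.
move=> ua [N' [c ac]]; exists (f c) => eps eps_pos; exists (maxn N' N) => n /leP.
by rewrite geq_max => /andP [hN' hN]; rewrite ua // ac // /R_dist Rminus_diag Rabs_R0.
Qed.

Lemma converges_ext (u v : nat -> R) : (forall n, u n = v n) -> converges v -> converges u.
Proof. by move=> uv [l vl]; exists l; apply: Un_cv_ext vl. Qed.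

Lemma converges_const (u : nat -> R) c : (forall n, u n = c) -> converges u.
Proof.
move=> uc; exists c => eps eps_pos; exists 0%nat => n _.
by rewrite uc /R_dist Rminus_diag Rabs_R0.
Qed.

Lemma Rabs_ratio_sub_le (h j i y : R) : 0 < i -> i <= y -> 0 <= j <= i ->
  j <= h <= j + (y - i) -> Rabs (h / y - j / i) <= (y - i) / y.
Proof.
move=> i_pos iy [j_ge0 ji] [jh hj].
have y_pos : 0 < y by lra.
set p := j / i; have pi : p * i = j by rewrite /p; field; lra.
have p01 : 0 <= p <= 1.
  split; first by apply: Rmult_le_pos; [lra | left; apply: Rinv_0_lt_compat].
  by apply: (Rmult_le_reg_r i); lra.
have -> : h / y - p = (h - p * y) / y by field; lra.
have inv_y_pos : 0 < / y by apply: Rinv_0_lt_compat.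
rewrite /Rdiv Rabs_mult (Rabs_right (/ y)); last lra.
apply: Rmult_le_compat_r; first lra.
by apply: Rabs_le; nra.
Qed.

Lemma Un_cv_close (u v : nat -> R) (m : nat -> nat) (C l : R) N :
  Un_cv u l -> (forall n, (N <= n)%N -> Rabs (u n - v n) <= C / INR (m n)) ->
  (forall B, exists N', forall n, (N' <= n)%N -> (B <= m n)%N) -> Un_cv v l.
Proof.
move=> ul uv m_inf eps eps_pos.
have [N1 HN1] := ul (eps / 2) ltac:(lra).
pose B := Z.to_nat (up (2 * Rabs C / eps)).
have B_ge : 2 * Rabs C / eps <= INR B.
  have [up_gt _] := archimed (2 * Rabs C / eps).
  have ratio_ge0 : 0 <= 2 * Rabs C / eps.
    by apply: Rmult_le_pos; [have := Rabs_pos C; lra | left; apply: Rinv_0_lt_compat].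
  rewrite /B INR_IZR_INZ Z2Nat.id; first lra.
  by apply: le_IZR; lra.
have [N2 HN2] := m_inf B.+1.
exists (maxn (maxn N1 N) N2) => n /leP; rewrite !geq_max => /andP [/andP [hN1 hN] hN2].
have /HN1 u_close : (n >= N1)%coq_nat by apply/leP.
have m_gt : INR B < INR (m n) by apply: lt_INR; apply/ltP; apply: HN2.
have m_pos : 0 < INR (m n) by have := pos_INR B; lra.
have C_small : C / INR (m n) <= eps / 2.
  apply: (Rmult_le_reg_r (INR (m n))) => //; rewrite /Rdiv Rmult_assoc Rinv_l; last lra.
  have : 2 * Rabs C <= eps * INR B.
    have -> : 2 * Rabs C = (2 * Rabs C / eps) * eps by field; lra.
    nra.
  by have := Rle_abs C; nra.
rewrite /R_dist in u_close *; have := uv n hN.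
have -> : v n - l = (u n - l) - (u n - v n) by ring.
by move=> uv_n; apply: Rle_lt_trans (Rabs_triang _ _) _; rewrite Rabs_Ropp; lra.
Qed.

Lemma tE F G : t F G = INR (hom_count F G) / INR (dv G ^ dv F).
Proof. by []. Qed.

Lemma t_injE F G : t_inj F G =
  if (dv G < dv F)%N then 0 else INR (inj_hom_count F G) / INR (dv G ^_ dv F).
Proof. by rewrite /t_inj card_injective_ffun. Qed.

Lemma ffact_INR_pos k m : (k <= m)%N -> 0 < INR (m ^_ k).
Proof. by move=> km; apply: lt_0_INR; apply/ltP; rewrite ffact_gt0. Qed.

Lemma t_sub_t_inj_le F G : (0 < dv G)%N -> (dv F <= dv G)%N ->
  Rabs (t F G - t_inj F G) <= INR (dv F * dv F) / INR (dv G).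
Proof.
move=> G_pos FG; rewrite tE t_injE ltnNge FG /=.
have [ffact_le exp_sub_le] := exp_sub_ffact_le FG.
have G_posR : 0 < INR (dv G) by apply: lt_0_INR; apply/ltP.
have exp_posR : 0 < INR (dv G ^ dv F) by apply: lt_0_INR; apply/ltP; rewrite expn_gt0 G_pos.
apply: Rle_trans (Rabs_ratio_sub_le (ffact_INR_pos FG) _ _ _) _.
- exact/le_INR/leP.
- by split; [apply: pos_INR | apply/le_INR/leP; apply: inj_hom_count_le].
- split; first by apply/le_INR/leP; apply: inj_hom_count_le_hom.
  rewrite -minus_INR -?plus_INR; last exact/leP.
  by apply/le_INR/leP; apply: hom_count_le_inj.
apply: (Rmult_le_reg_r (INR (dv G ^ dv F) * INR (dv G))); first exact: Rmult_lt_0_compat.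
have -> : (INR (dv G ^ dv F) - INR (dv G ^_ dv F)) / INR (dv G ^ dv F) *
    (INR (dv G ^ dv F) * INR (dv G)) = INR (dv G) * INR (dv G ^ dv F - dv G ^_ dv F).
  by rewrite minus_INR; [field; lra | apply/leP].
have -> : INR (dv F * dv F) / INR (dv G) * (INR (dv G ^ dv F) * INR (dv G)) =
    INR (dv F * dv F * dv G ^ dv F) by rewrite !mult_INR; field; lra.
by rewrite -mult_INR; apply/le_INR/leP.
Qed.

Definition avoid_density (F G : digraph) (S : {set 'I_(dv F) * 'I_(dv F)}) : R :=
  if (dv G < dv F)%N then 0 else INR (avoid_count F G S) / INR (dv G ^_ dv F).

Arguments avoid_density : clear implicits.

Lemma t_inj_avoid_density F G : t_inj F G = avoid_density F G set0.
Proof. by rewrite t_injE /avoid_density avoid_count0. Qed.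

Lemma t_ind_avoid_density F G : t_ind F G = avoid_density F G (non_edges F).
Proof. by rewrite /t_ind /avoid_density avoid_count_non_edges card_injective_ffun. Qed.

Lemma avoid_density_setU1 F G (S : {set 'I_(dv F) * 'I_(dv F)}) e : e \notin S ->
  avoid_density F G (e |: S) = avoid_density F G S - avoid_density (add_edge F e) G S.
Proof.
move=> eS; rewrite /avoid_density /=; case: ifP => _; first ring.
by rewrite -(avoid_count_setU1 G eS) plus_INR /Rdiv Rmult_plus_distr_r; ring.
Qed.

Definition antichain (k : nat) : digraph := @Digraph k (fun _ _ => false).

Lemma t_inj_antichain k G : t_inj (antichain k) G = INR (k <= dv G)%N.
Proof.
rewrite t_injE; case: ltnP => // kG.
have -> : inj_hom_count (antichain k) G = dv G ^_ k.
  rewrite -card_injective_ffun; apply: eq_card => f; rewrite !inE.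
  by case: (injectiveb f) => //=; apply/forallP => i; apply/forallP.
rewrite /Rdiv Rinv_r //; apply: Rgt_not_eq; exact: ffact_INR_pos.
Qed.

Section PosetSequence.
Variable P : nat -> digraph.
Hypothesis P_poset : forall n, nonempty (P n) /\ is_poset (P n).

Local Notation converges_all dens := (forall F, nonempty F -> converges (fun n => dens F (P n))).
Local Notation converges_posets dens :=
  (forall Q, nonempty Q -> is_poset Q -> converges (fun n => dens Q (P n))).

Section BoundedSize.
Variables (M N : nat).
Hypothesis P_size : forall n, (N <= n)%N -> dv (P n) = M.

Lemma size_pos : (0 < M)%N.
Proof. by rewrite -(P_size (leqnn N)); case: (P_poset N). Qed.

Lemma hom_count_eventually_const F :
  converges (fun n => t F (P n)) -> eventually_const (fun n => hom_count F (P n)).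
Proof.
apply: (@eventually_const_of_converges _ _ (INR (M ^ dv F)) N) => [|n hN].
  by apply: lt_0_INR; apply/ltP; rewrite expn_gt0 size_pos.
by rewrite tE P_size.
Qed.

Lemma inj_hom_count_eventually_const F :
  converges (fun n => t_inj F (P n)) -> eventually_const (fun n => inj_hom_count F (P n)).
Proof.
case: (ltnP M (dv F)) => [MF _|FM].
  exists N, 0%N => n hN; apply/eqP; rewrite -leqn0.
  by apply: leq_trans (inj_hom_count_le _ _) _; rewrite P_size // ffact_small.
apply: (@eventually_const_of_converges _ _ _ N (ffact_INR_pos FM)) => n hN.
by rewrite t_injE P_size // ltnNge FM.
Qed.

Lemma bounded_t_inj_of_t : converges_all t -> converges_all t_inj.
Proof.
move=> t_conv; suff inj_ev K : forall F, nonempty F -> (dv F < K)%N ->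
    eventually_const (fun n => inj_hom_count F (P n)).
  move=> F F_ne; apply: (@converges_of_eventually_const _ _
    (fun x => if (M < dv F)%N then 0 else INR x / INR (M ^_ dv F)) N _ (inj_ev _ F F_ne (ltnSn _))).
  by move=> n hN; rewrite t_injE P_size.
elim: K => [//|K IH] F F_ne FK.
apply: (@eventually_const_ext _ (fun n => hom_count F (P n) -
    \sum_(r | is_kerrep r && (r != [ffun i => i])) inj_hom_count (contract F r) (P n))%N 0%N).
  by move=> n _; rewrite hom_count_inj_contract addnK.
apply: eventually_const_sub; first exact/hom_count_eventually_const/t_conv.
apply: eventually_const_sum => r /andP [r_ker r_nid]; apply: IH.
  exact: contract_nonempty.
by have := card_reps_lt r_nid; rewrite card_ord => reps_lt; apply: leq_trans reps_lt FK.
Qed.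

Lemma bounded_t_of_t_inj : converges_all t_inj -> converges_all t.
Proof.
move=> inj_conv F F_ne.
apply: (@converges_of_eventually_const _ (fun n => hom_count F (P n))
  (fun x => INR x / INR (M ^ dv F)) N) => [n hN|]; first by rewrite tE P_size.
apply: (@eventually_const_ext _
  (fun n => \sum_(r | is_kerrep r) inj_hom_count (contract F r) (P n))%N 0%N).
  by move=> n _; rewrite hom_count_kerrep.
apply: eventually_const_sum => r r_ker.
by apply/inj_hom_count_eventually_const/inj_conv; apply: contract_nonempty.
Qed.

End BoundedSize.

Lemma unbounded_converges_t_iff_t_inj F :
  (forall B, exists N, forall n, (N <= n)%N -> (B <= dv (P n))%N) ->
  converges (fun n => t F (P n)) <-> converges (fun n => t_inj F (P n)).
Proof.
move=> P_inf; have [N HN] := P_inf (dv F).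
have close n : (N <= n)%N ->
    Rabs (t F (P n) - t_inj F (P n)) <= INR (dv F * dv F) / INR (dv (P n)).
  by move=> hN; apply: t_sub_t_inj_le; [case: (P_poset n) | apply: HN].
split=> [[l t_cv]|[l inj_cv]]; exists l.
  exact: (Un_cv_close (m := fun n => dv (P n)) t_cv close P_inf).
apply: (Un_cv_close (m := fun n => dv (P n)) (N := N) (C := INR (dv F * dv F)) inj_cv _ P_inf).
move=> n hN.
by rewrite Rabs_minus_sym; apply: close.
Qed.

Lemma t_inj_of_t : converges_all t -> nat_converges_ext (fun n => dv (P n)) -> converges_all t_inj.
Proof.
move=> t_conv [[M [N P_size]]|P_inf]; first exact: (bounded_t_inj_of_t P_size).
by move=> F F_ne; apply/(unbounded_converges_t_iff_t_inj F P_inf)/t_conv.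
Qed.

Lemma size_converges_of_t_inj : converges_all t_inj -> nat_converges_ext (fun n => dv (P n)).
Proof.
move=> inj_conv; apply: nat_converges_ext_thresholds => -[|j]; first by exists 0%N, 1%N.
apply: (@eventually_const_of_converges _ _ 1 0%N Rlt_0_1) (inj_conv (antichain j.+1) _) => // n _.
by rewrite t_inj_antichain /Rdiv Rinv_1 Rmult_1_r.
Qed.

Lemma t_of_t_inj : converges_all t_inj -> converges_all t /\ nat_converges_ext (fun n => dv (P n)).
Proof.
move=> inj_conv; have size_conv := size_converges_of_t_inj inj_conv; split=> //.
case: size_conv => [[M [N P_size]]|P_inf]; first exact: (bounded_t_of_t_inj P_size).
by move=> F F_ne; apply/(unbounded_converges_t_iff_t_inj F P_inf)/inj_conv.
Qed.

Lemma avoid_density_converges_of_t_inj : converges_all t_inj ->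
  forall F (S : {set 'I_(dv F) * 'I_(dv F)}), nonempty F ->
  converges (fun n => avoid_density F (P n) S).
Proof.
move=> inj_conv F S; move: {2}#|S| (erefl #|S|) => s; elim: s F S => [|s IH] F S S_card F_ne.
  rewrite (cards0_eq S_card); apply: converges_ext (inj_conv F F_ne) => n.
  by rewrite t_inj_avoid_density.
have [e eS] : exists e, e \in S by apply/card_gt0P; rewrite S_card.
have S'_card : #|S :\ e| = s by move: S_card; rewrite (cardsD1 e) eS add1n => -[].
have [l1 cv1] := IH F _ S'_card F_ne.
have [l2 cv2] := IH (add_edge F e) (S :\ e) S'_card F_ne.
rewrite -(setD1K eS); exists (l1 - l2).
apply: (Un_cv_ext (fun n =>
  avoid_density F (P n) (S :\ e) - avoid_density (add_edge F e) (P n) (S :\ e))).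
  by move=> n; rewrite avoid_density_setU1 // setD11.
exact: CV_minus.
Qed.

Lemma avoid_density_converges_of_t_ind : converges_all t_ind ->
  forall F (S : {set 'I_(dv F) * 'I_(dv F)}), nonempty F -> S \subset non_edges F ->
  converges (fun n => avoid_density F (P n) S).
Proof.
move=> ind_conv F S; move: {2}#|non_edges F :\: S| (erefl #|non_edges F :\: S|) => d.
elim: d F S => [|d IH] F S d_card F_ne S_sub.
  have -> : S = non_edges F by apply/eqP; rewrite eqEsubset S_sub -setD_eq0 -cards_eq0 d_card.
  by apply: converges_ext (ind_conv F F_ne) => n; rewrite t_ind_avoid_density.
have [e] : exists e, e \in non_edges F :\: S by apply/card_gt0P; rewrite d_card.
rewrite inE => /andP [eS e_non].
have [l1 cv1] : converges (fun n => avoid_density F (P n) (e |: S)).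
  apply: IH F_ne _; last by rewrite subUset sub1set e_non S_sub.
  by move: d_card; rewrite (cardsD1 e) in_setD eS e_non add1n setDDl setUC => -[].
have [l2 cv2] : converges (fun n => avoid_density (add_edge F e) (P n) S).
  apply: (IH (add_edge F e)) F_ne _.
    move: d_card; rewrite non_edges_add_edge (cardsD1 e) in_setD eS e_non add1n.
    by rewrite !setDDl setUC => -[].
  rewrite non_edges_add_edge; apply/subsetP => p pS; rewrite in_setD1 (subsetP S_sub) // andbT.
  by apply: contraNneq eS => <-.
exists (l1 + l2); apply: (Un_cv_ext (fun n =>
  avoid_density F (P n) (e |: S) + avoid_density (add_edge F e) (P n) S)).
  by move=> n; rewrite avoid_density_setU1 //; ring.
exact: CV_plus.
Qed.

Lemma t_ind_of_t_inj : converges_all t_inj -> converges_all t_ind.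
Proof.
move=> inj_conv F F_ne; apply: converges_ext (avoid_density_converges_of_t_inj inj_conv _ F_ne).
by move=> n; rewrite t_ind_avoid_density.
Qed.

Lemma t_inj_of_t_ind : converges_all t_ind -> converges_all t_inj.
Proof.
move=> ind_conv F F_ne.
apply: converges_ext (avoid_density_converges_of_t_ind ind_conv F_ne (sub0set _)).
by move=> n; rewrite t_inj_avoid_density.
Qed.

Lemma t_of_t_posets : converges_posets t -> converges_all t.
Proof.
move=> t_conv F F_ne; have [/existsP [i loop]|no_loop] := boolP [exists i, @de (tclosure F) i i].
  apply: (converges_const (c := 0)) => n; have [_ [Pn_irr Pn_tr]] := P_poset n.
  by rewrite tE -hom_count_tclosure // (hom_count_loop Pn_irr loop) /Rdiv Rmult_0_l.
apply: converges_ext (t_conv (tclosure F) F_ne (tclosure_poset _)) => [n|i].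
  by rewrite !tE hom_count_tclosure //; case: (P_poset n).
by apply/negP => loop; move/existsP: no_loop; apply; exists i.
Qed.

Lemma t_inj_of_t_inj_posets : converges_posets t_inj -> converges_all t_inj.
Proof.
move=> inj_conv F F_ne; have [/existsP [i loop]|no_loop] := boolP [exists i, @de (tclosure F) i i].
  apply: (converges_const (c := 0)) => n; have [_ [Pn_irr Pn_tr]] := P_poset n.
  rewrite t_injE -inj_hom_count_tclosure //.
  have -> : inj_hom_count (tclosure F) (P n) = 0%N.
    by apply/eqP; rewrite -leqn0 -(hom_count_loop Pn_irr loop) inj_hom_count_le_hom.
  by case: ifP; rewrite // /Rdiv Rmult_0_l.
apply: converges_ext (inj_conv (tclosure F) F_ne (tclosure_poset _)) => [n|i].
  by rewrite !t_injE inj_hom_count_tclosure //; case: (P_poset n).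
by apply/negP => loop; move/existsP: no_loop; apply; exists i.
Qed.

Lemma t_ind_of_t_ind_posets : converges_posets t_ind -> converges_all t_ind.
Proof.
move=> ind_conv F F_ne; have [F_poset|F_nposet] := classic (is_poset F); first exact: ind_conv.
apply: (converges_const (c := 0)) => n; rewrite /t_ind.
have -> : #|[set f : {ffun 'I_(dv F) -> 'I_(dv (P n))} | is_ind f]| = 0%N.
  apply/eqP; rewrite cards_eq0; apply/eqP/setP => f; rewrite !inE.
  by apply/negP => /ind_poset F_poset; apply/F_nposet/F_poset; case: (P_poset n).
by case: ifP; rewrite // /Rdiv Rmult_0_l.
Qed.

End PosetSequence.

Theorem theorem3p1 (P : nat -> digraph)
  (HP : forall n, nonempty (P n) /\ is_poset (P n)) :
  [<->
   (forall Q, nonempty Q -> is_poset Q -> converges (fun n => t Q (P n)))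
     /\ nat_converges_ext (fun n => dv (P n));
   forall Q, nonempty Q -> is_poset Q -> converges (fun n => t_inj Q (P n));
   forall Q, nonempty Q -> is_poset Q -> converges (fun n => t_ind Q (P n));
   (forall F, nonempty F -> converges (fun n => t F (P n)))
     /\ nat_converges_ext (fun n => dv (P n));
   forall F, nonempty F -> converges (fun n => t_inj F (P n));
   forall F, nonempty F -> converges (fun n => t_ind F (P n))].
Proof.
tfae.
- case=> t_conv size_conv Q Q_ne _.
  exact: (t_inj_of_t HP (t_of_t_posets HP t_conv) size_conv Q_ne).
- by move=> inj_conv Q Q_ne _; apply: (t_ind_of_t_inj (t_inj_of_t_inj_posets HP inj_conv)).
- by move=> ind_conv; apply/(t_of_t_inj HP)/t_inj_of_t_ind/t_ind_of_t_ind_posets.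
- by case=> t_conv size_conv; apply: t_inj_of_t.
- exact: t_ind_of_t_inj.
- move=> ind_conv; have [t_conv size_conv] := t_of_t_inj HP (t_inj_of_t_ind ind_conv).
  by split=> // Q Q_ne _; apply: t_conv.
Qed.
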